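(* The normalized action-to-frequency map $$\check\Omega:\ell^{1,1}_{\ge 0}\to\mathfrak c_\uparrow,\qquad \gamma=(\gamma_n)_{n\ge1}\mapsto(\check\omega_n(\gamma))_{n\ge1},\qquad \check\omega_n(\gamma):=\sum_{k\ge1}k\gamma_k-\sum_{k>n}(k-n)\gamma_k,$$ is well defined and is a homeomorphism, where $\ell^{1,1}_{\ge0}$ carries the topology of the norm $\|x\|_{\ell^{1,1}}=\sum_{n\ge1}n|x_n|$ and $\mathfrak c_\uparrow$ carries the topology of the sup-norm $\|y\|=\sup_{n\ge1}|y_n|$.
   Context: $\ell^{1,1}_{\ge0}:=\{(x_n)_{n\ge1}: x_n\in\mathbb R,\ x_n\ge0\ \forall n\ge1,\ \sum_{n\ge1}n x_n<\infty\}$. $\mathfrak c$ denotes the real Banach space of convergent real sequences $y=(y_n)_{n\ge1}$ with the sup-norm; for $y\in\mathfrak c$ set $y_0:=0$. $\mathfrak c_\uparrow\subset\mathfrak c$ is the set of $y\in\mathfrak c$ with $0\le y_n\le y_{n+1}$ and $(y_n-y_{n-1})-(y_{n+1}-y_n)\ge0$ for all $n\ge1$. *)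

(* Real sequences (x_n)_{n>=1} are represented as  x : nat -> R  with the
   convention x 0 = 0 (index 0 is a dummy slot, matching the paper's y_0 := 0). *)
From Stdlib Require Import Reals.
From Coquelicot Require Import Coquelicot.
Open Scope R_scope.

Definition l11_nonneg (x : nat -> R) : Prop :=
  x 0%nat = 0 /\ (forall n, (1 <= n)%nat -> 0 <= x n) /\
  ex_series (fun n => INR n * x n).

Definition l11_norm (x : nat -> R) : R := Series (fun n => INR n * Rabs (x n)).

Definition conv_seq (y : nat -> R) : Prop :=
  y 0%nat = 0 /\ exists l : R, is_lim_seq (fun n => y (S n)) l.

Definition sup_norm (y : nat -> R) : R := real (Sup_seq (fun n => Rabs (y (S n)))).

Definition c_up (y : nat -> R) : Prop :=
  conv_seq y /\
  forall n, (1 <= n)%nat ->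
    0 <= y n /\ y n <= y (S n) /\
    (y n - y (n - 1)%nat) - (y (S n) - y n) >= 0.

Definition omega_check (g : nat -> R) (n : nat) : R :=
  match n with
  | O => 0
  | S _ => Series (fun k => INR k * g k)
           - Series (fun k => if (n <? k)%nat then (INR k - INR n) * g k else 0)
  end.

Definition seq_sub (x y : nat -> R) : nat -> R := fun n => x n - y n.

From Stdlib Require Import Reals Lra Lia FunctionalExtensionality.
From Coquelicot Require Import Coquelicot.
Open Scope R_scope.

(* Splitting sum_k k g_k at n turns the defining formula into the closed form
     omega_n(g) = freq g n = sum_{k<=n} k g_k + n * sum_{k>n} g_k,
   valid for every g in l^{1,1} (no sign condition).  Its first difference is
   the tail sum_{k>n} g_k and its second difference is -g_{n+1}; moreover
   |freq g n| <= ||g||, freq is linear, and freq g n -> sum_k k g_k.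

   From these facts: nonnegativity of g gives monotonicity and concavity
   (well-definedness); second differences give injectivity; for y in c_up the
   sequence gamma_n = d_n - d_{n+1}, d_n = y_n - y_{n-1}, is a preimage
   (surjectivity); |freq h n| <= ||h|| gives continuity.  For the inverse, with
   s = sup |freq (g' - g)|, every |g'_k - g_k| is at most 4s and the weighted
   tail sum_{k>N} k (g'_k - g_k) is O(N s); for nonnegative g, g' the
   l^{1,1} distance is then bounded by C_N s + 2 sum_{k>N} k g_k. *)

Lemma ex_series_dominated (a b : nat -> R) :
  (forall n, Rabs (a n) <= b n) -> ex_series b -> ex_series a.
Proof. intros H Hb. exact (@ex_series_le R_AbsRing R_CompleteNormedModule a b H Hb). Qed.

Lemma Series_nonneg (a : nat -> R) :
  (forall n, 0 <= a n) -> ex_series a -> 0 <= Series a.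
Proof.
  intros Ha Hex.
  replace 0 with (Series (fun _ => 0 * 0)) by (rewrite Series_scal_l; ring).
  apply Series_le; [intros n; specialize (Ha n); lra | exact Hex].
Qed.

Definition tail (a : nat -> R) (n : nat) : R := Series (fun k => a (S n + k)%nat).

Section Tails.
Variable a : nat -> R.
Hypothesis Ha : ex_series a.

Lemma ex_series_shift n : ex_series (fun k => a (S n + k)%nat).
Proof. exact (proj1 (ex_series_incr_n a (S n)) Ha). Qed.

Lemma tail_split n : Series a = sum_f_R0 a n + tail a n.
Proof. exact (Series_incr_n a (S n) (Nat.lt_0_succ n) Ha). Qed.

Lemma tail_step n : tail a n = a (S n) + tail a (S n).
Proof.
  unfold tail. rewrite Series_incr_1 by apply ex_series_shift.
  rewrite Nat.add_0_r. f_equal. apply Series_ext. intros k. f_equal. lia.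
Qed.

Lemma tail_lim : is_lim_seq (tail a) 0.
Proof.
  assert (Hs : is_lim_seq (sum_f_R0 a) (Series a)).
  { eapply is_lim_seq_ext; [|exact (Series_correct _ Ha)].
    intros n. apply sum_n_Reals. }
  assert (H := is_lim_seq_minus' _ _ _ _ (is_lim_seq_const (Series a)) Hs).
  rewrite Rminus_eq_0 in H. eapply is_lim_seq_ext; [|exact H].
  intros n. simpl. rewrite (tail_split n). ring.
Qed.
End Tails.

Lemma tail_nonneg (a : nat -> R) n :
  (forall k, 0 <= a k) -> ex_series a -> 0 <= tail a n.
Proof. intros Hpos Ha. apply Series_nonneg; [auto | now apply ex_series_shift]. Qed.

Lemma tail_abs (a : nat -> R) n :
  ex_series (fun k => Rabs (a k)) -> Rabs (tail a n) <= tail (fun k => Rabs (a k)) n.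
Proof. intros Ha. apply Series_Rabs. exact (ex_series_shift _ Ha n). Qed.

Lemma tail_minus (a b : nat -> R) n : ex_series a -> ex_series b ->
  tail (fun k => a k - b k) n = tail a n - tail b n.
Proof. intros Ha Hb. apply Series_minus; now apply ex_series_shift. Qed.

Definition weight (g : nat -> R) (k : nat) : R := INR k * g k.
Definition abs_weight (g : nat -> R) (k : nat) : R := INR k * Rabs (g k).
Definition l11 (g : nat -> R) : Prop := ex_series (abs_weight g).

Lemma abs_weight_nonneg g k : 0 <= abs_weight g k.
Proof. apply Rmult_le_pos; [apply pos_INR | apply Rabs_pos]. Qed.

Lemma Rabs_weight g k : Rabs (weight g k) = abs_weight g k.
Proof. unfold weight, abs_weight. rewrite Rabs_mult, Rabs_pos_eq by apply pos_INR. reflexivity. Qed.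

Lemma l11_nonneg_weight g : l11_nonneg g -> abs_weight g = weight g.
Proof.
  intros [H0 [Hpos _]]. extensionality k. unfold abs_weight, weight.
  destruct k as [|k]; [rewrite H0, Rabs_R0; reflexivity|].
  rewrite Rabs_pos_eq by (apply Hpos; lia). reflexivity.
Qed.

Lemma l11_nonneg_entry g k : l11_nonneg g -> 0 <= g k.
Proof. intros [H0 [Hpos _]]. destruct k as [|k]; [lra | apply Hpos; lia]. Qed.

Lemma l11_of_nonneg g : l11_nonneg g -> l11 g.
Proof. intros Hg. unfold l11. rewrite (l11_nonneg_weight g Hg). apply Hg. Qed.

Lemma l11_sub g g' : l11 g -> l11 g' -> l11 (seq_sub g' g).
Proof.
  intros Hg Hg'. apply (ex_series_dominated _ (fun k => abs_weight g' k + abs_weight g k)).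
  - intros k. rewrite Rabs_pos_eq by apply abs_weight_nonneg.
    unfold abs_weight, seq_sub. rewrite <- Rmult_plus_distr_l.
    apply Rmult_le_compat_l; [apply pos_INR|].
    unfold Rminus. rewrite <- (Rabs_Ropp (g k)). apply Rabs_triang.
  - exact (@ex_series_plus R_AbsRing R_NormedModule _ _ Hg' Hg).
Qed.

Section L11.
Variable g : nat -> R.
Hypothesis Hg : l11 g.

Lemma ex_series_weight : ex_series (weight g).
Proof.
  apply ex_series_Rabs. eapply ex_series_ext; [|exact Hg].
  intros k. symmetry. apply Rabs_weight.
Qed.

(* Beyond index 0 each |g_k| is dominated by k |g_k|, so g itself is summable. *)
Lemma ex_series_l11 : ex_series g.
Proof.
  apply (ex_series_incr_n g 1).
  apply (ex_series_dominated _ (fun k => abs_weight g (1 + k)%nat)).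
  - intros k. unfold abs_weight. pose proof (Rabs_pos (g (1 + k)%nat)).
    assert (1 <= INR (1 + k)) by (apply (le_INR 1); lia). nra.
  - now apply (ex_series_shift _ Hg 0).
Qed.
End L11.

Definition head (g : nat -> R) (n : nat) : R := sum_f_R0 (weight g) n.
Definition freq (g : nat -> R) (n : nat) : R := head g n + INR n * tail g n.

Section Freq.
Variable g : nat -> R.
Hypothesis Hg : l11 g.

(* omega_check agrees with the closed form: splitting sum_k k g_k at n,
   sum_{k>n} (k-n) g_k = sum_{k>n} k g_k - n sum_{k>n} g_k. *)
Lemma omega_check_freq : omega_check g = freq g.
Proof.
  extensionality n. destruct n as [|m]; [unfold freq, head, weight; simpl; ring|].
  unfold omega_check. set (n := S m).
  assert (Hshift : Series (fun k => if (n <? k)%nat then (INR k - INR n) * g k else 0)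
                   = tail (weight g) n - INR n * tail g n).
  { rewrite (Series_incr_n_aux
      (fun k => if (n <? k)%nat then (INR k - INR n) * g k else 0) (S n)).
    2:{ intros k Hk. destruct (Nat.ltb_spec n k); [lia | reflexivity]. }
    unfold tail. rewrite <- Series_scal_l, <- Series_minus.
    - apply Series_ext. intros k. destruct (Nat.ltb_spec n (S n + k)); [|lia].
      unfold weight. ring.
    - now apply ex_series_shift, ex_series_weight.
    - apply (ex_series_scal_l (V := R_NormedModule)). now apply ex_series_shift, ex_series_l11. }
  rewrite Hshift. change (fun k => INR k * g k) with (weight g).
  rewrite (tail_split _ (ex_series_weight g Hg) n). unfold freq, head. ring.
Qed.

Lemma freq_step n : freq g (S n) - freq g n = tail g n.
Proof.
  unfold freq, head. rewrite tech5, (tail_step _ (ex_series_l11 g Hg) n).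
  unfold weight. rewrite S_INR. ring.
Qed.

Lemma second_difference n :
  g (S n) = (freq g (S n) - freq g n) - (freq g (S (S n)) - freq g (S n)).
Proof.
  rewrite !freq_step, (tail_step _ (ex_series_l11 g Hg) n). ring.
Qed.

Lemma scaled_tail_bound n : Rabs (INR n * tail g n) <= tail (abs_weight g) n.
Proof.
  assert (Hdom : forall k, Rabs (INR n * g (S n + k)%nat) <= abs_weight g (S n + k)%nat).
  { intros k. unfold abs_weight. rewrite Rabs_mult, Rabs_pos_eq by apply pos_INR.
    apply Rmult_le_compat_r; [apply Rabs_pos | apply le_INR; lia]. }
  unfold tail. rewrite <- Series_scal_l. eapply Rle_trans.
  - apply Series_Rabs. apply (ex_series_dominated _ (fun k => abs_weight g (S n + k)%nat)).
    + intros k. rewrite Rabs_Rabsolu. apply Hdom.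
    + now apply ex_series_shift.
  - apply Series_le; [|now apply ex_series_shift].
    intros k. split; [apply Rabs_pos | apply Hdom].
Qed.

Lemma freq_bound n : Rabs (freq g n) <= l11_norm g.
Proof.
  change (l11_norm g) with (Series (abs_weight g)). rewrite (tail_split _ Hg n).
  unfold freq. eapply Rle_trans; [apply Rabs_triang | apply Rplus_le_compat].
  - eapply Rle_trans; [apply sum_f_R0_triangle|]. apply sum_Rle. intros k _.
    rewrite Rabs_weight. apply Rle_refl.
  - apply scaled_tail_bound.
Qed.

Lemma freq_lim : is_lim_seq (freq g) (Series (weight g)).
Proof.
  set (L := Series (weight g)).
  assert (Hclose : forall n, Rabs (freq g n - L) <= 2 * tail (abs_weight g) n).
  { intros n. unfold freq, head, L. rewrite (tail_split _ (ex_series_weight g Hg) n).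
    assert (Habs : Rabs (tail (weight g) n) <= tail (abs_weight g) n).
    { replace (abs_weight g) with (fun k => Rabs (weight g k))
        by (extensionality k; apply Rabs_weight).
      apply tail_abs. eapply ex_series_ext; [|exact Hg].
      intros k. symmetry. apply Rabs_weight. }
    pose proof (scaled_tail_bound n).
    replace (sum_f_R0 (weight g) n + INR n * tail g n - (sum_f_R0 (weight g) n + tail (weight g) n))
      with (INR n * tail g n - tail (weight g) n) by ring.
    unfold Rminus. eapply Rle_trans; [apply Rabs_triang|]. rewrite Rabs_Ropp. lra. }
  assert (Ht : is_lim_seq (fun n => 2 * tail (abs_weight g) n) 0).
  { replace (Finite 0) with (Rbar_mult 2 0) by (simpl; f_equal; ring).
    apply is_lim_seq_scal_l, tail_lim, Hg. }
  apply (is_lim_seq_le_le (fun n => L - 2 * tail (abs_weight g) n) _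
                          (fun n => L + 2 * tail (abs_weight g) n)).
  - intros n. specialize (Hclose n). apply Rabs_le_between in Hclose. lra.
  - rewrite <- (Rminus_0_r L) at 1. apply is_lim_seq_minus'; [apply is_lim_seq_const | exact Ht].
  - rewrite <- (Rplus_0_r L) at 1. apply is_lim_seq_plus'; [apply is_lim_seq_const | exact Ht].
Qed.
End Freq.

Lemma freq_0 g : freq g 0 = 0.
Proof. unfold freq, head, weight. simpl. ring. Qed.

Lemma freq_sub g g' : l11 g -> l11 g' ->
  freq (seq_sub g' g) = seq_sub (freq g') (freq g).
Proof.
  intros Hg Hg'. extensionality n. unfold freq, head, seq_sub at 3.
  rewrite (sum_eq _ (fun k => weight g' k - weight g k))
    by (intros; unfold weight, seq_sub; ring).
  rewrite minus_sum.
  change (tail (seq_sub g' g) n) with (tail (fun k => g' k - g k) n).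
  rewrite tail_minus by now apply ex_series_l11. ring.
Qed.

(* Well-definedness: for g >= 0 the frequencies start at 0, converge, are
   nonnegative, nondecreasing (first difference = tail >= 0) and concave
   (second difference = -g <= 0). *)
Lemma freq_c_up g : l11_nonneg g -> c_up (freq g).
Proof.
  intros Hg. pose proof (l11_of_nonneg g Hg) as Hl.
  assert (Hpos : forall k, 0 <= g k) by (intros; now apply l11_nonneg_entry).
  assert (Htail : forall n, 0 <= tail g n)
    by (intros; apply tail_nonneg; [exact Hpos | now apply ex_series_l11]).
  split; [split|].
  - apply freq_0.
  - exists (Series (weight g)). apply (is_lim_seq_incr_1 (freq g)). now apply freq_lim.
  - intros n Hn. destruct n as [|m]; [lia|]. replace (S m - 1)%nat with m by lia.
    assert (Hhead : 0 <= head g (S m)).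
    { apply cond_pos_sum. intros k. apply Rmult_le_pos; [apply pos_INR | apply Hpos]. }
    pose proof (Htail (S m)). pose proof (pos_INR (S m)).
    pose proof (freq_step g Hl (S m)). pose proof (second_difference g Hl m).
    pose proof (Hpos (S m)).
    repeat split; [unfold freq; nra | lra | lra].
Qed.

(* Injectivity: g is determined by the second differences of its frequencies. *)
Lemma omega_check_injective g g' : l11_nonneg g -> l11_nonneg g' ->
  omega_check g = omega_check g' -> g = g'.
Proof.
  intros Hg Hg' E. pose proof (l11_of_nonneg g Hg) as Hl. pose proof (l11_of_nonneg g' Hg') as Hl'.
  rewrite (omega_check_freq g Hl), (omega_check_freq g' Hl') in E.
  extensionality n. destruct n as [|m].
  - now rewrite (proj1 Hg), (proj1 Hg').
  - now rewrite (second_difference g Hl m), (second_difference g' Hl' m), E.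
Qed.

Section Preimage.
Variable y : nat -> R.
Hypothesis Hy : c_up y.

Definition increment (n : nat) : R := y n - y (n - 1)%nat.
Definition preimage (n : nat) : R :=
  match n with O => 0 | S _ => increment n - increment (S n) end.

Lemma y_nondecreasing n : y n <= y (S n).
Proof.
  destruct Hy as [[H0 _] H]. destruct n as [|m].
  - rewrite H0. apply (H 1%nat). lia.
  - apply (H (S m)). lia.
Qed.

Lemma y_lim : exists l : R, is_lim_seq y l.
Proof. destruct Hy as [[_ [l Hl]] _]. exists l. now apply is_lim_seq_incr_1. Qed.

Lemma increment_nonneg n : 0 <= increment (S n).
Proof. unfold increment. rewrite Nat.sub_succ, Nat.sub_0_r. pose proof (y_nondecreasing n). lra. Qed.

Lemma preimage_nonneg n : 0 <= preimage n.
Proof.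
  destruct n as [|m]; simpl preimage; [lra|].
  destruct Hy as [_ H]. destruct (H (S m)) as [_ [_ Hconc]]; [lia|].
  unfold increment. replace (S (S m) - 1)%nat with (S m) by lia. lra.
Qed.

Lemma increment_lim : is_lim_seq (fun n => increment (S n)) 0.
Proof.
  destruct y_lim as [l Hl].
  assert (H := is_lim_seq_minus' _ _ _ _ (proj1 (is_lim_seq_incr_1 y l) Hl) Hl).
  rewrite Rminus_eq_0 in H. eapply is_lim_seq_ext; [|exact H].
  intros n. unfold increment. now rewrite Nat.sub_succ, Nat.sub_0_r.
Qed.

Lemma head_preimage n : head preimage n = y n - INR n * increment (S n).
Proof.
  induction n as [|n IH].
  - unfold head, weight. simpl. destruct Hy as [[H0 _] _]. rewrite H0. ring.
  - unfold head in *. rewrite tech5, IH. unfold weight. simpl preimage.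
    rewrite S_INR. unfold increment. rewrite !Nat.sub_succ, !Nat.sub_0_r. ring.
Qed.

(* The weighted partial sums are nondecreasing and bounded by lim y. *)
Lemma preimage_l11 : l11_nonneg preimage.
Proof.
  split; [reflexivity | split; [intros; apply preimage_nonneg|]].
  destruct y_lim as [l Hl].
  assert (Hw : forall k, 0 <= weight preimage k)
    by (intros; apply Rmult_le_pos; [apply pos_INR | apply preimage_nonneg]).
  destruct (ex_finite_lim_seq_incr (sum_n (weight preimage)) l) as [s Hs].
  - intros n. rewrite !sum_n_Reals, tech5. pose proof (Hw (S n)). lra.
  - intros n. rewrite sum_n_Reals. fold (head preimage n). rewrite head_preimage.
    pose proof (is_lim_seq_incr_compare y l Hl y_nondecreasing n).
    pose proof (increment_nonneg n). pose proof (pos_INR n). nra.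
  - exists s. exact Hs.
Qed.

(* The tails telescope:  sum_{k>n} gamma_k = d_{n+1}. *)
Lemma tail_preimage n : tail preimage n = increment (S n).
Proof.
  unfold tail. apply is_series_unique.
  assert (Hpartial : forall m, increment (S n) - increment (S (S n + m))
                               = sum_n (fun k => preimage (S n + k)%nat) m).
  { intros m. rewrite sum_n_Reals.
    change (AbelianMonoid.sort R_AbelianMonoid) with R.
    induction m as [|m IH].
    - simpl. rewrite Nat.add_0_r. ring.
    - rewrite tech5, <- IH. replace (S n + S m)%nat with (S (S n + m)) by lia.
      simpl. ring. }
  assert (Hlim : is_lim_seq (fun m => increment (S n) - increment (S (S n + m)))
                            (increment (S n) - 0)).
  { apply is_lim_seq_minus'; [apply is_lim_seq_const|].
    assert (H := proj1 (is_lim_seq_incr_n _ (S n) 0) increment_lim).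
    eapply is_lim_seq_ext; [|exact H]. intros m. simpl. do 2 f_equal. lia. }
  rewrite Rminus_0_r in Hlim. exact (is_lim_seq_ext _ _ _ Hpartial Hlim).
Qed.

(* Combining head and tail:  freq gamma n = y_n - n d_{n+1} + n d_{n+1} = y_n. *)
Lemma freq_preimage : freq preimage = y.
Proof.
  extensionality n. unfold freq. rewrite head_preimage, tail_preimage. ring.
Qed.
End Preimage.

Lemma sup_norm_spec (y : nat -> R) B : (forall n, Rabs (y (S n)) <= B) ->
  sup_norm y <= B /\ forall n, Rabs (y (S n)) <= sup_norm y.
Proof.
  intros Hb. unfold sup_norm.
  assert (Hc := Sup_seq_correct (fun n => Finite (Rabs (y (S n))))).
  destruct (Sup_seq (fun n => Finite (Rabs (y (S n))))) as [s| |]; simpl in *.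
  - split.
    + apply Rnot_lt_le. intros Hlt.
      destruct (Hc (mkposreal (s - B) ltac:(lra))) as [_ [n Hn]]. simpl in Hn.
      specialize (Hb n). lra.
    + intros n. apply Rnot_lt_le. intros Hlt.
      destruct (Hc (mkposreal (Rabs (y (S n)) - s) ltac:(lra))) as [Hn _].
      specialize (Hn n). simpl in Hn. lra.
  - destruct (Hc B) as [n Hn]. specialize (Hb n). simpl in Hn. lra.
  - specialize (Hc (Rabs (y 1%nat)) 0%nat). simpl in Hc. lra.
Qed.

Section Estimates.
Variable h : nat -> R.
Hypothesis Hh : l11 h.
Let s := sup_norm (freq h).

Lemma sup_norm_freq_le : s <= l11_norm h.
Proof. apply (sup_norm_spec (freq h) (l11_norm h)). intros n. now apply freq_bound. Qed.

Lemma freq_le_sup_norm n : Rabs (freq h n) <= s.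
Proof.
  destruct (sup_norm_spec (freq h) (l11_norm h)) as [_ Hsup];
    [intros; now apply freq_bound|].
  destruct n as [|n]; [|apply Hsup].
  rewrite freq_0, Rabs_R0. eapply Rle_trans; [apply Rabs_pos | apply (Hsup 0%nat)].
Qed.

Lemma sup_norm_freq_nonneg : 0 <= s.
Proof. eapply Rle_trans; [apply Rabs_pos | apply (freq_le_sup_norm 0)]. Qed.

(* Each entry is a second difference of frequencies, so |h_k| <= 4 s for k >= 1. *)
Lemma abs_weight_le_sup k : abs_weight h k <= INR k * (4 * s).
Proof.
  unfold abs_weight. destruct k as [|k]; [simpl; lra|].
  apply Rmult_le_compat_l; [apply pos_INR|].
  rewrite (second_difference h Hh k).
  pose proof (freq_le_sup_norm k) as A. pose proof (freq_le_sup_norm (S k)) as B.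
  pose proof (freq_le_sup_norm (S (S k))) as C.
  apply Rabs_le_between in A, B, C. apply Rabs_le. lra.
Qed.

Lemma weight_sum_le_sup : Rabs (Series (weight h)) <= s.
Proof.
  assert (H := is_lim_seq_abs _ _ (freq_lim h Hh)).
  assert (Hle := is_lim_seq_le _ _ _ _ freq_le_sup_norm H (is_lim_seq_const s)).
  exact Hle.
Qed.

(* sum_{k>N} k h_k = lim freq h - freq h N + N (freq h (N+1) - freq h N). *)
Lemma weight_tail_le_sup N : Rabs (tail (weight h) N) <= (2 * INR N + 2) * s.
Proof.
  pose proof (tail_split _ (ex_series_weight h Hh) N) as Hsplit.
  pose proof (freq_step h Hh N) as Hstep.
  assert (E : tail (weight h) N
              = Series (weight h) - freq h N + INR N * (freq h (S N) - freq h N)).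
  { rewrite Hstep. unfold freq, head in *. lra. }
  pose proof weight_sum_le_sup as L.
  pose proof (freq_le_sup_norm N) as A. pose proof (freq_le_sup_norm (S N)) as B.
  apply Rabs_le_between in L, A, B. pose proof (pos_INR N).
  rewrite E. apply Rabs_le. split; nra.
Qed.

Lemma head_abs_weight_le_sup N : sum_f_R0 (abs_weight h) N <= 4 * INR N * INR (S N) * s.
Proof.
  replace (4 * INR N * INR (S N) * s) with (INR N * (4 * s) * INR (S N)) by ring.
  rewrite <- sum_cte. apply sum_Rle. intros k Hk.
  eapply Rle_trans; [apply abs_weight_le_sup|].
  apply Rmult_le_compat_r; [|apply le_INR; exact Hk].
  pose proof sup_norm_freq_nonneg. lra.
Qed.
End Estimates.

Lemma omega_check_sub g g' : l11_nonneg g -> l11_nonneg g' ->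
  seq_sub (omega_check g') (omega_check g) = freq (seq_sub g' g).
Proof.
  intros Hg Hg'. pose proof (l11_of_nonneg g Hg). pose proof (l11_of_nonneg g' Hg').
  rewrite !omega_check_freq by assumption. symmetry. now apply freq_sub.
Qed.

(* For g, g' >= 0 the l^{1,1} distance splits into a head controlled by s and
   a tail  sum_{k>N} k |g'_k - g_k| <= sum_{k>N} k g'_k + sum_{k>N} k g_k,  where the
   tail of g' differs from that of g by sum_{k>N} k (g'_k - g_k) = O(N s). *)
Lemma l11_distance_bound g g' N : l11_nonneg g -> l11_nonneg g' ->
  l11_norm (seq_sub g' g)
  <= (4 * INR N * INR (S N) + 2 * INR N + 2) * sup_norm (freq (seq_sub g' g))
     + 2 * tail (weight g) N.
Proof.
  intros Hg Hg'. set (h := seq_sub g' g).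
  pose proof (l11_of_nonneg g Hg) as Hl. pose proof (l11_of_nonneg g' Hg') as Hl'.
  assert (Hh : l11 h) by now apply l11_sub.
  pose proof (ex_series_weight g Hl) as Hw. pose proof (ex_series_weight g' Hl') as Hw'.
  assert (Htails : tail (abs_weight h) N <= tail (weight g') N + tail (weight g) N).
  { unfold tail. rewrite <- Series_plus by now apply ex_series_shift.
    apply Series_le.
    - intros k. split; [apply abs_weight_nonneg|].
      rewrite <- (l11_nonneg_weight g Hg), <- (l11_nonneg_weight g' Hg').
      unfold abs_weight, h, seq_sub. rewrite <- Rmult_plus_distr_l.
      apply Rmult_le_compat_l; [apply pos_INR|].
      unfold Rminus. rewrite <- (Rabs_Ropp (g _)). apply Rabs_triang.
    - apply (ex_series_plus (V := R_NormedModule)); now apply ex_series_shift. }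
  assert (Htail' : tail (weight g') N = tail (weight h) N + tail (weight g) N).
  { replace (tail (weight h) N) with (tail (fun k => weight g' k - weight g k) N)
      by (unfold tail; apply Series_ext; intros k; unfold weight, h, seq_sub; ring).
    rewrite tail_minus by assumption. ring. }
  change (l11_norm h) with (Series (abs_weight h)). rewrite (tail_split _ Hh N).
  pose proof (head_abs_weight_le_sup h Hh N).
  pose proof (weight_tail_le_sup h Hh N) as Ht. apply Rabs_le_between in Ht.
  lra.
Qed.

(* Continuity of the inverse at g: pick N with a small weighted tail of g,
   then make s small against the polynomial factor in N. *)
Lemma inverse_continuity g : l11_nonneg g -> forall eps, 0 < eps -> exists delta, 0 < delta /\
  forall g', l11_nonneg g' ->
    sup_norm (seq_sub (omega_check g') (omega_check g)) < delta ->
    l11_norm (seq_sub g' g) < eps.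
Proof.
  intros Hg eps Heps.
  assert (Hlim := tail_lim _ (ex_series_weight g (l11_of_nonneg g Hg))).
  apply is_lim_seq_spec in Hlim.
  destruct (Hlim (mkposreal (eps / 4) ltac:(lra))) as [N HN].
  specialize (HN N (le_n N)). simpl in HN. rewrite Rminus_0_r in HN.
  apply Rabs_lt_between in HN.
  set (C := 4 * INR N * INR (S N) + 2 * INR N + 2).
  assert (HC : 0 < C) by (unfold C; pose proof (pos_INR N); pose proof (pos_INR (S N)); nra).
  exists (eps / (2 * C)). split; [apply Rdiv_lt_0_compat; lra|].
  intros g' Hg' Hs. rewrite (omega_check_sub g g' Hg Hg') in Hs.
  pose proof (l11_distance_bound g g' N Hg Hg') as Hbound. fold C in Hbound.
  assert (Cs : C * sup_norm (freq (seq_sub g' g)) < eps / 2).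
  { apply (Rmult_lt_compat_l C) in Hs; [|exact HC].
    replace (C * (eps / (2 * C))) with (eps / 2) in Hs by (field; lra). exact Hs. }
  lra.
Qed.

Theorem proposition2p1 :
  (* well defined: maps l11_nonneg into c_up *)
  (forall g, l11_nonneg g -> c_up (omega_check g)) /\
  (* injective on l11_nonneg *)
  (forall g g', l11_nonneg g -> l11_nonneg g' ->
     omega_check g = omega_check g' -> g = g') /\
  (* surjective onto c_up *)
  (forall y, c_up y -> exists g, l11_nonneg g /\ omega_check g = y) /\
  (* continuous (l^{1,1}-norm -> sup-norm) *)
  (forall g, l11_nonneg g -> forall eps, 0 < eps -> exists delta, 0 < delta /\
     forall g', l11_nonneg g' -> l11_norm (seq_sub g' g) < delta ->
       sup_norm (seq_sub (omega_check g') (omega_check g)) < eps) /\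
  (* inverse continuous (sup-norm -> l^{1,1}-norm) *)
  (forall g, l11_nonneg g -> forall eps, 0 < eps -> exists delta, 0 < delta /\
     forall g', l11_nonneg g' ->
       sup_norm (seq_sub (omega_check g') (omega_check g)) < delta ->
       l11_norm (seq_sub g' g) < eps).
Proof.
  split; [|split; [|split; [|split]]].
  - intros g Hg. rewrite (omega_check_freq g (l11_of_nonneg g Hg)). now apply freq_c_up.
  - exact omega_check_injective.
  - intros y Hy. exists (preimage y). pose proof (preimage_l11 y Hy) as Hp.
    split; [exact Hp|].
    rewrite (omega_check_freq _ (l11_of_nonneg _ Hp)). now apply freq_preimage.
  - intros g Hg eps Heps. exists eps. split; [exact Heps|]. intros g' Hg' Hd.
    rewrite (omega_check_sub g g' Hg Hg').
    eapply Rle_lt_trans; [|exact Hd].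
    apply sup_norm_freq_le, l11_sub; now apply l11_of_nonneg.
  - exact inverse_continuity.
Qed.
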